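(* For a multi-parameter family $\rho(\theta)=\sum_{k=1}^d p_k(\theta)|w_k(\theta)\rangle\langle w_k(\theta)|$ with a chosen smooth spectral decomposition as in the context, at every $\theta$ one has the matrix inequality $$H_{SLD}(\theta)\le C_L(\theta),$$ i.e. $v^TH_{SLD}(\theta)v\le v^TC_L(\theta)v$ for all $v\in\mathbb{R}^p$.
   Context: Let $\Theta\subseteq\mathbb{R}^p$ be open and $\rho(\theta)=\sum_{k=1}^d p_k(\theta)|w_k(\theta)\rangle\langle w_k(\theta)|$, where $p_k:\Theta\to[0,1]$ are smooth with $\sum_k p_k=1$ and $|w_1(\theta)\rangle,\dots,|w_d(\theta)\rangle$ is an orthonormal basis of $\mathbb{C}^d$ depending smoothly on $\theta$. Write $|w_k^{(l)}\rangle=\frac{\partial}{\partial\theta^l}|w_k(\theta)\rangle$. Convention: indices $i$ with $p_i(\theta)=0$ are omitted from sums containing $1/p_i$. The $C_L$ quantum information is the $p\times p$ matrix $$C_L(\theta)_{kl}=\sum_i\frac{1}{p_i}\frac{\partial p_i}{\partial\theta^k}\frac{\partial p_i}{\partial\theta^l}+4\,\Re\sum_{i<j}(p_i+p_j)\langle w_i^{(k)}|w_j\rangle\langle w_j|w_i^{(l)}\rangle.$$ The SLD quantum information matrix is $H_{SLD}(\theta)_{kl}=\Re\,\mathrm{tr}\{\rho(\theta)\lambda_k(\theta)\lambda_l(\theta)\}$, where $\lambda_k(\theta)$ is any Hermitian solution of $\frac{\partial\rho}{\partial\theta^k}=\frac12(\rho\lambda_k+\lambda_k\rho)$. For symmetric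 matrices, $A\le B$ means $B-A$ is positive semidefinite. *)

(* Complex numbers are
   modelled as pairs of reals, vectors of C^d as nat -> C (only indices < d
   matter), matrices as nat -> nat -> C, parameters theta in R^p as nat -> R
   (only coordinates < p matter). *)
From Stdlib Require Import Reals Lra.
Open Scope R_scope.

Definition C := (R * R)%type.
Definition Cre (z : C) : R := fst z.
Definition Cim (z : C) : R := snd z.
Definition Czero : C := (0, 0).
Definition Cone : C := (1, 0).
Definition RtoC (r : R) : C := (r, 0).
Definition Cadd (z u : C) : C := (fst z + fst u, snd z + snd u).
Definition Cmul (z u : C) : C :=
  (fst z * fst u - snd z * snd u, fst z * snd u + snd z * fst u).
Definition Cconj (z : C) : C := (fst z, - snd z).

Fixpoint Csum (n : nat) (f : nat -> C) : C :=
  match n with O => Czero | S m => Cadd (Csum m f) (f m) end.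
Fixpoint Rsum (n : nat) (f : nat -> R) : R :=
  match n with O => 0 | S m => Rsum m f + f m end.

Definition Vec := nat -> C.
Definition Mat := nat -> nat -> C.

Definition inner (d : nat) (a b : Vec) : C :=
  Csum d (fun m => Cmul (Cconj (a m)) (b m)).
Definition outer (a b : Vec) : Mat := fun i j => Cmul (a i) (Cconj (b j)).
Definition mmul (d : nat) (A B : Mat) : Mat :=
  fun i j => Csum d (fun m => Cmul (A i m) (B m j)).
Definition mtrace (d : nat) (A : Mat) : C := Csum d (fun i => A i i).
Definition hermitian (d : nat) (A : Mat) : Prop :=
  forall i j, (i < d)%nat -> (j < d)%nat -> A j i = Cconj (A i j).

Definition Pt := nat -> R.
Definition shift (x : Pt) (l : nat) (t : R) : Pt :=
  fun i => if Nat.eqb i l then x i + t else x i.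
Definition near (p : nat) (x : Pt) (delta : R) (y : Pt) : Prop :=
  forall i, (i < p)%nat -> Rabs (y i - x i) < delta.
Definition is_open (p : nat) (Theta : Pt -> Prop) : Prop :=
  forall x, Theta x -> exists delta, 0 < delta /\
    forall y, near p x delta y -> Theta y.
Definition continuous_on (p : nat) (Theta : Pt -> Prop) (f : Pt -> R) : Prop :=
  forall x, Theta x -> forall eps, 0 < eps -> exists delta, 0 < delta /\
    forall y, Theta y -> near p x delta y -> Rabs (f y - f x) < eps.
Definition partial_at (f : Pt -> R) (l : nat) (x : Pt) (v : R) : Prop :=
  derivable_pt_lim (fun t => f (shift x l t)) 0 v.
Definition partialC_at (f : Pt -> C) (l : nat) (x : Pt) (v : C) : Prop :=
  partial_at (fun y => Cre (f y)) l x (Cre v) /\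
  partial_at (fun y => Cim (f y)) l x (Cim v).

Fixpoint Ck (p : nat) (Theta : Pt -> Prop) (n : nat) (f : Pt -> R) : Prop :=
  match n with
  | O => continuous_on p Theta f
  | S m => continuous_on p Theta f /\
      forall l, (l < p)%nat -> exists g : Pt -> R,
        (forall x, Theta x -> partial_at f l x (g x)) /\ Ck p Theta m g
  end.
Definition smooth (p : nat) (Theta : Pt -> Prop) (f : Pt -> R) : Prop :=
  forall n, Ck p Theta n f.
Definition smoothC (p : nat) (Theta : Pt -> Prop) (f : Pt -> C) : Prop :=
  smooth p Theta (fun y => Cre (f y)) /\ smooth p Theta (fun y => Cim (f y)).

Definition rho (d : nat) (P : nat -> Pt -> R) (w : nat -> Pt -> Vec) (x : Pt) : Mat :=
  fun i j => Csum d (fun k => Cmul (RtoC (P k x)) (outer (w k x) (w k x) i j)).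

(* C_L(theta)_{kl}, given the partial derivatives dP i k = d p_i / d theta^k
   and dw i k = |w_i^{(k)}> at theta; terms with p_i = 0 are omitted. *)
Definition CL (d : nat) (P : nat -> Pt -> R) (w : nat -> Pt -> Vec) (x : Pt)
    (dP : nat -> nat -> R) (dw : nat -> nat -> Vec) (k l : nat) : R :=
  Rsum d (fun i => if Req_EM_T (P i x) 0 then 0 else / P i x * dP i k * dP i l)
  + 4 * Cre (Csum d (fun j => Csum j (fun i =>
          Cmul (RtoC (P i x + P j x))
               (Cmul (inner d (dw i k) (w j x)) (inner d (w j x) (dw i l)))))).

Definition HSLD (d : nat) (P : nat -> Pt -> R) (w : nat -> Pt -> Vec) (x : Pt)
    (lam : nat -> Mat) (k l : nat) : R :=
  Cre (mtrace d (mmul d (mmul d (rho d P w x) (lam k)) (lam l))).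

Definition quad (p : nat) (M : nat -> nat -> R) (v : nat -> R) : R :=
  Rsum p (fun k => Rsum p (fun l => v k * v l * M k l)).

(* Fix theta = x, write p_i = P i x and |w_i> = w i x, and work in the
   eigenframe {|w_i>} of rho(x), which is orthonormal and hence complete.
   1. Calculus.  Since Theta is open, <w_i|w_j> = delta_ij holds near x, so
      <w_i^(k)|w_j> + <w_i|w_j^(k)> = 0 (frame_tangent); the product rule gives
      d_k rho = sum_n d_k p_n |w_n><w_n| + p_n (|w_n^(k)><w_n| + |w_n><w_n^(k)|)
      (spectral_partial), which by uniqueness of derivatives equals
      (rho lam_k + lam_k rho)/2.
   2. Matrix elements of that equation in the eigenframe (sld_relation):
        (p_i + p_j)/2 <w_i|lam_k|w_j> = delta_ij d_k p_i + (p_j - p_i) <w_i|w_j^(k)>.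
   3. Both quadratic forms are sums of squared moduli of the v-weighted
      coefficients: by Parseval, v^T H v = sum_{i,j} p_i |ell_ji|^2 (quad_HSLD),
      and v^T C_L v = sum_i |alpha_i|^2 / p_i + 4 sum_{i<j} (p_i+p_j) |u_ji|^2
      (quad_CL).
   4. Step 2 compares the sums term by term (eigenframe_bound): diagonal terms
      coincide, and an off-diagonal pair obeys (p_i+p_j)|ell_ij|^2 <=
      4 (p_i+p_j)|u_ij|^2 because |p_j - p_i| <= p_i + p_j. *)

From Stdlib Require Import Reals Lra Lia Psatz FunctionalExtensionality.
Open Scope R_scope.

Ltac Csolve := unfold Cadd, Cmul, Cconj, RtoC, Czero, Cone, Cre, Cim;
  apply injective_projections; simpl; field.

Lemma Csum_ext n f g : (forall i, (i < n)%nat -> f i = g i) -> Csum n f = Csum n g.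
Proof.
  induction n as [|n IH]; simpl; intros H; auto.
  rewrite IH by (intros; apply H; lia). rewrite (H n) by lia. reflexivity.
Qed.

Lemma Csum_add n f g : Csum n (fun i => Cadd (f i) (g i)) = Cadd (Csum n f) (Csum n g).
Proof. induction n as [|n IH]; simpl; [Csolve|]. rewrite IH. Csolve. Qed.

Lemma Csum_mull n c f : Csum n (fun i => Cmul c (f i)) = Cmul c (Csum n f).
Proof. induction n as [|n IH]; simpl; [Csolve|]. rewrite IH. Csolve. Qed.

Lemma Csum_mulr n c f : Csum n (fun i => Cmul (f i) c) = Cmul (Csum n f) c.
Proof. induction n as [|n IH]; simpl; [Csolve|]. rewrite IH. Csolve. Qed.

Lemma Csum_zero n f : (forall i, (i < n)%nat -> f i = Czero) -> Csum n f = Czero.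
Proof.
  induction n as [|n IH]; simpl; intros H; auto.
  rewrite IH by (intros; apply H; lia). rewrite H by lia. Csolve.
Qed.

Lemma Csum_swap n m f :
  Csum n (fun i => Csum m (fun j => f i j)) = Csum m (fun j => Csum n (fun i => f i j)).
Proof.
  induction n as [|n IH]; simpl.
  - symmetry; apply Csum_zero; auto.
  - rewrite IH, <- Csum_add. reflexivity.
Qed.

Lemma Csum_conj n f : Cconj (Csum n f) = Csum n (fun i => Cconj (f i)).
Proof. induction n as [|n IH]; simpl; [Csolve|]. rewrite <- IH. Csolve. Qed.

Lemma Cre_sum n f : Cre (Csum n f) = Rsum n (fun i => Cre (f i)).
Proof. induction n as [|n IH]; simpl; auto. rewrite <- IH. reflexivity. Qed.

Lemma Rsum_ext n f g : (forall i, (i < n)%nat -> f i = g i) -> Rsum n f = Rsum n g.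
Proof.
  induction n as [|n IH]; simpl; intros H; auto.
  rewrite IH by (intros; apply H; lia). rewrite (H n) by lia. reflexivity.
Qed.

Lemma Rsum_add n f g : Rsum n (fun i => f i + g i) = Rsum n f + Rsum n g.
Proof. induction n as [|n IH]; simpl; [ring|]. rewrite IH. ring. Qed.

Lemma Rsum_mull n c f : Rsum n (fun i => c * f i) = c * Rsum n f.
Proof. induction n as [|n IH]; simpl; [ring|]. rewrite IH. ring. Qed.

Lemma Rsum_zero n f : (forall i, (i < n)%nat -> f i = 0) -> Rsum n f = 0.
Proof.
  induction n as [|n IH]; simpl; intros H; auto.
  rewrite IH by (intros; apply H; lia). rewrite H by lia. ring.
Qed.

Lemma Rsum_swap n m f :
  Rsum n (fun i => Rsum m (fun j => f i j)) = Rsum m (fun j => Rsum n (fun i => f i j)).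
Proof.
  induction n as [|n IH]; simpl.
  - symmetry; apply Rsum_zero; auto.
  - rewrite IH, <- Rsum_add. reflexivity.
Qed.

Lemma Rsum_le n f g : (forall i, (i < n)%nat -> f i <= g i) -> Rsum n f <= Rsum n g.
Proof.
  induction n as [|n IH]; simpl; intros H; [lra|].
  pose proof (H n ltac:(lia)). pose proof (IH ltac:(intros; apply H; lia)). lra.
Qed.

Lemma Rsum_nonneg n f : (forall i, (i < n)%nat -> 0 <= f i) -> 0 <= Rsum n f.
Proof.
  intros H. rewrite <- (Rsum_zero n (fun _ => 0)) by auto. apply Rsum_le; auto.
Qed.

Lemma Rsum_zero_inv n f : (forall i, (i < n)%nat -> 0 <= f i) -> Rsum n f = 0 ->
  forall i, (i < n)%nat -> f i = 0.
Proof.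
  induction n as [|n IH]; simpl; intros H Hs i Hi; [lia|].
  assert (0 <= Rsum n f) by (apply Rsum_nonneg; intros; apply H; lia).
  pose proof (H n ltac:(lia)).
  destruct (Nat.eq_dec i n) as [->|Hin]; [lra|].
  apply IH; [intros; apply H; lia | lra | lia].
Qed.

Lemma Rsum_split n f : Rsum n (fun i => Rsum n (fun j => f i j)) =
  Rsum n (fun i => f i i) + Rsum n (fun j => Rsum j (fun i => f i j + f j i)).
Proof.
  induction n as [|n IH]; simpl; [ring|].
  rewrite !Rsum_add, IH. change (Rsum n (fun j => f n j)) with (Rsum n (f n)). ring.
Qed.

Definition delta (a b : nat) : C := if Nat.eqb a b then Cone else Czero.

Lemma delta_refl a : delta a a = Cone.
Proof. unfold delta. rewrite Nat.eqb_refl. reflexivity. Qed.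

Lemma delta_neq a b : a <> b -> delta a b = Czero.
Proof. intros H. unfold delta. destruct (Nat.eqb_spec a b); [contradiction|reflexivity]. Qed.

Lemma delta_sym a b : delta a b = delta b a.
Proof. unfold delta. rewrite Nat.eqb_sym. reflexivity. Qed.

Lemma Csum_delta_l n a f : (a < n)%nat -> Csum n (fun b => Cmul (delta a b) (f b)) = f a.
Proof.
  induction n as [|n IH]; intros H; [lia|]. simpl.
  destruct (Nat.eq_dec a n) as [->|Han].
  - rewrite Csum_zero, delta_refl; [Csolve|].
    intros i Hi. rewrite delta_neq by lia. Csolve.
  - rewrite IH, delta_neq by lia. Csolve.
Qed.

Lemma Csum_delta_r n a f : (a < n)%nat -> Csum n (fun b => Cmul (delta b a) (f b)) = f a.
Proof.
  intros H. rewrite <- (Csum_delta_l n a f H).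
  apply Csum_ext; intros i _. rewrite delta_sym. reflexivity.
Qed.

Definition Cnorm2 (z : C) : R := Cre z * Cre z + Cim z * Cim z.

Lemma Cnorm2_nonneg z : 0 <= Cnorm2 z.
Proof. unfold Cnorm2. nra. Qed.

Lemma Cnorm2_eq0 z : Cnorm2 z = 0 -> z = Czero.
Proof.
  unfold Cnorm2, Cre, Cim, Czero. destruct z as [a b]; simpl; intros H.
  assert (a = 0) by nra. assert (b = 0) by nra. subst; reflexivity.
Qed.

Lemma Cnorm2_mul z u : Cnorm2 (Cmul z u) = Cnorm2 z * Cnorm2 u.
Proof. unfold Cnorm2, Cmul, Cre, Cim. simpl. ring. Qed.

Lemma Cnorm2_conj z : Cnorm2 (Cconj z) = Cnorm2 z.
Proof. unfold Cnorm2, Cconj, Cre, Cim. simpl. ring. Qed.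

Lemma Cnorm2_RtoC r : Cnorm2 (RtoC r) = r * r.
Proof. unfold Cnorm2, RtoC, Cre, Cim. simpl. ring. Qed.

Lemma Cre_scal r z : Cre (Cmul (RtoC r) z) = r * Cre z.
Proof. unfold Cre, Cmul, RtoC. simpl. ring. Qed.

Definition app (d : nat) (A : Mat) (u : Vec) : Vec :=
  fun a => Csum d (fun b => Cmul (A a b) (u b)).

Lemma conj_inner d y z : Cconj (inner d y z) = inner d z y.
Proof. unfold inner. rewrite Csum_conj. apply Csum_ext; intros. Csolve. Qed.

Lemma inner_ext d y y' z z' : (forall m, (m < d)%nat -> y m = y' m) ->
  (forall m, (m < d)%nat -> z m = z' m) -> inner d y z = inner d y' z'.
Proof. intros H1 H2. unfold inner. apply Csum_ext; intros. rewrite H1, H2; auto. Qed.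

Lemma inner_scal_l d r y z :
  inner d (fun m => Cmul (RtoC r) (y m)) z = Cmul (RtoC r) (inner d y z).
Proof. unfold inner. rewrite <- Csum_mull. apply Csum_ext; intros; Csolve. Qed.

Lemma inner_scal_r d y c z : inner d y (fun m => Cmul c (z m)) = Cmul c (inner d y z).
Proof. unfold inner. rewrite <- Csum_mull. apply Csum_ext; intros; Csolve. Qed.

Lemma app_ext d A u u' a : (forall b, (b < d)%nat -> u b = u' b) -> app d A u a = app d A u' a.
Proof. intros H. unfold app. apply Csum_ext; intros. rewrite H; auto. Qed.

Lemma app_scal d A c u a : app d A (fun m => Cmul c (u m)) a = Cmul c (app d A u a).
Proof. unfold app. rewrite <- Csum_mull. apply Csum_ext; intros; Csolve. Qed.

Lemma app_mmul d A B u a : app d (mmul d A B) u a = app d A (app d B u) a.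
Proof.
  unfold app, mmul.
  transitivity (Csum d (fun b => Csum d (fun m => Cmul (A a m) (Cmul (B m b) (u b))))).
  - apply Csum_ext; intros. rewrite <- Csum_mulr. apply Csum_ext; intros; Csolve.
  - rewrite Csum_swap. apply Csum_ext; intros. rewrite <- Csum_mull. reflexivity.
Qed.

Lemma mmul_assoc d A B E i j : mmul d (mmul d A B) E i j = mmul d A (mmul d B E) i j.
Proof.
  unfold mmul.
  transitivity (Csum d (fun m => Csum d (fun b => Cmul (A i b) (Cmul (B b m) (E m j))))).
  - apply Csum_ext; intros. rewrite <- Csum_mulr. apply Csum_ext; intros; Csolve.
  - rewrite Csum_swap. apply Csum_ext; intros. rewrite <- Csum_mull. reflexivity.
Qed.

Lemma inner_app_herm d A y z : hermitian d A -> inner d (app d A y) z = inner d y (app d A z).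
Proof.
  intros H. unfold inner, app.
  transitivity (Csum d (fun m => Csum d (fun b => Cmul (Cconj (y b)) (Cmul (A b m) (z m))))).
  - apply Csum_ext; intros m Hm. rewrite Csum_conj, <- Csum_mulr.
    apply Csum_ext; intros b Hb. rewrite (H m b) by auto. Csolve.
  - rewrite Csum_swap. apply Csum_ext; intros b Hb. rewrite <- Csum_mull.
    apply Csum_ext; intros; Csolve.
Qed.

Lemma sand_expand d y M z :
  inner d y (app d M z) = Csum d (fun a => Csum d (fun b => Cmul (Cconj (y a)) (Cmul (M a b) (z b)))).
Proof. unfold inner, app. apply Csum_ext; intros. rewrite Csum_mull. reflexivity. Qed.

Lemma sand_ext d y M M' z : (forall a b, (a < d)%nat -> (b < d)%nat -> M a b = M' a b) ->
  inner d y (app d M z) = inner d y (app d M' z).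
Proof.
  intros H. rewrite !sand_expand. apply Csum_ext; intros; apply Csum_ext; intros.
  rewrite H; auto.
Qed.

Lemma sand_sum d n y F z :
  inner d y (app d (fun a b => Csum n (fun k => F k a b)) z) = Csum n (fun k => inner d y (app d (F k) z)).
Proof.
  rewrite sand_expand.
  transitivity (Csum d (fun a => Csum d (fun b => Csum n (fun k =>
    Cmul (Cconj (y a)) (Cmul (F k a b) (z b)))))).
  - apply Csum_ext; intros; apply Csum_ext; intros.
    rewrite <- Csum_mulr, <- Csum_mull. apply Csum_ext; intros; Csolve.
  - transitivity (Csum d (fun a => Csum n (fun k => Csum d (fun b =>
      Cmul (Cconj (y a)) (Cmul (F k a b) (z b)))))).
    + apply Csum_ext; intros; apply Csum_swap.
    + rewrite Csum_swap. apply Csum_ext; intros. rewrite sand_expand. reflexivity.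
Qed.

Lemma sand_add d y A B z : inner d y (app d (fun a b => Cadd (A a b) (B a b)) z) =
  Cadd (inner d y (app d A z)) (inner d y (app d B z)).
Proof.
  rewrite !sand_expand, <- Csum_add. apply Csum_ext; intros.
  rewrite <- Csum_add. apply Csum_ext; intros; Csolve.
Qed.

Lemma sand_scal d y c A z :
  inner d y (app d (fun a b => Cmul c (A a b)) z) = Cmul c (inner d y (app d A z)).
Proof.
  rewrite !sand_expand, <- Csum_mull. apply Csum_ext; intros.
  rewrite <- Csum_mull. apply Csum_ext; intros; Csolve.
Qed.

Lemma sand_outer d y s t z :
  inner d y (app d (outer s t) z) = Cmul (inner d y s) (inner d t z).
Proof.
  rewrite sand_expand. unfold inner, outer. rewrite <- Csum_mulr.
  apply Csum_ext; intros. rewrite <- Csum_mull. apply Csum_ext; intros; Csolve.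
Qed.

Section OrthonormalFrame.
Variables (d : nat) (W : nat -> Vec).
Hypothesis Hon : forall i j, (i < d)%nat -> (j < d)%nat -> inner d (W i) (W j) = delta i j.

Definition frame_proj (a b : nat) : C := Csum d (fun i => Cmul (W i a) (Cconj (W i b))).

Lemma frame_proj_herm a b : Cconj (frame_proj a b) = frame_proj b a.
Proof. unfold frame_proj. rewrite Csum_conj. apply Csum_ext; intros; Csolve. Qed.

Lemma frame_proj_idem a c :
  Csum d (fun b => Cmul (frame_proj a b) (frame_proj b c)) = frame_proj a c.
Proof.
  unfold frame_proj.
  transitivity (Csum d (fun b => Csum d (fun i => Csum d (fun j =>
    Cmul (Cmul (W i a) (Cconj (W j c))) (Cmul (Cconj (W i b)) (W j b)))))).
  - apply Csum_ext; intros b _. rewrite <- Csum_mulr. apply Csum_ext; intros i _.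
    rewrite <- Csum_mull. apply Csum_ext; intros; Csolve.
  - rewrite Csum_swap. apply Csum_ext; intros i Hi. rewrite Csum_swap.
    transitivity (Csum d (fun j => Cmul (delta j i) (Cmul (W j a) (Cconj (W i c))))).
    + apply Csum_ext; intros j Hj. rewrite Csum_mull.
      change (Csum d (fun b => Cmul (Cconj (W i b)) (W j b))) with (inner d (W i) (W j)).
      rewrite Hon, delta_sym by auto.
      destruct (Nat.eq_dec j i) as [->|Hji]; [rewrite delta_refl | rewrite delta_neq by auto]; Csolve.
    + rewrite Csum_delta_r by auto. Csolve.
Qed.

Lemma frame_proj_trace : Csum d (fun a => frame_proj a a) = Csum d (fun a => delta a a).
Proof.
  unfold frame_proj. rewrite Csum_swap. apply Csum_ext; intros i Hi.
  rewrite <- (Hon i i) by auto. unfold inner. apply Csum_ext; intros; Csolve.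
Qed.

(* I - G: a Hermitian idempotent of trace zero, hence zero. *)
Definition frame_defect (a b : nat) : C := Cadd (delta a b) (Cmul (RtoC (-1)) (frame_proj a b)).

Lemma frame_defect_herm a b : Cconj (frame_defect a b) = frame_defect b a.
Proof.
  unfold frame_defect. rewrite <- frame_proj_herm, (delta_sym b a).
  unfold delta. destruct (Nat.eqb a b); Csolve.
Qed.

Lemma frame_defect_idem a : (a < d)%nat ->
  Csum d (fun b => Cmul (frame_defect a b) (frame_defect b a)) = frame_defect a a.
Proof.
  intros Ha. unfold frame_defect.
  transitivity (Csum d (fun b => Cadd
    (Cadd (Cmul (delta a b) (delta b a)) (Cmul (RtoC (-1)) (Cmul (delta a b) (frame_proj b a))))
    (Cadd (Cmul (RtoC (-1)) (Cmul (delta b a) (frame_proj a b)))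
          (Cmul (frame_proj a b) (frame_proj b a))))).
  - apply Csum_ext; intros. Csolve.
  - rewrite !Csum_add, !Csum_mull, frame_proj_idem, !Csum_delta_l, Csum_delta_r by auto. Csolve.
Qed.

Lemma frame_complete a b : (a < d)%nat -> (b < d)%nat -> frame_proj a b = delta a b.
Proof.
  intros Ha Hb.
  assert (Hnorms : Rsum d (fun a => Rsum d (fun b => Cnorm2 (frame_defect a b))) = 0).
  { transitivity (Cre (Csum d (fun a => frame_defect a a))).
    - rewrite Cre_sum. apply Rsum_ext; intros a' Ha'.
      rewrite <- frame_defect_idem, Cre_sum by auto. apply Rsum_ext; intros b' _.
      rewrite <- (frame_defect_herm a' b'). unfold Cnorm2, Cre, Cim, Cmul, Cconj. simpl. ring.
    - unfold frame_defect. rewrite Csum_add, Csum_mull, frame_proj_trace.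
      unfold Cre, Cadd, Cmul, RtoC. simpl. ring. }
  assert (Hrow := Rsum_zero_inv d _ (fun a _ => Rsum_nonneg d _ (fun b _ => Cnorm2_nonneg _))
                    Hnorms a Ha).
  assert (Hab := Rsum_zero_inv d _ (fun b _ => Cnorm2_nonneg _) Hrow b Hb).
  apply Cnorm2_eq0 in Hab. unfold frame_defect in Hab.
  transitivity (Cadd (delta a b) (Cmul (RtoC (-1)) (Cadd (delta a b) (Cmul (RtoC (-1)) (frame_proj a b))))).
  - Csolve.
  - rewrite Hab. Csolve.
Qed.

Lemma parseval y z : inner d y z = Csum d (fun j => Cmul (inner d y (W j)) (inner d (W j) z)).
Proof.
  transitivity (Csum d (fun m => Csum d (fun b => Cmul (Cmul (Cconj (y m)) (z b)) (frame_proj m b)))).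
  - unfold inner. apply Csum_ext; intros m Hm.
    rewrite <- (Csum_delta_l d m (fun b => Cmul (Cconj (y m)) (z b)) Hm).
    apply Csum_ext; intros b Hb. rewrite frame_complete by auto. Csolve.
  - unfold frame_proj, inner.
    transitivity (Csum d (fun m => Csum d (fun b => Csum d (fun j =>
       Cmul (Cmul (Cconj (y m)) (W j m)) (Cmul (Cconj (W j b)) (z b)))))).
    + apply Csum_ext; intros; apply Csum_ext; intros.
      rewrite <- Csum_mull. apply Csum_ext; intros; Csolve.
    + transitivity (Csum d (fun m => Csum d (fun j => Csum d (fun b =>
         Cmul (Cmul (Cconj (y m)) (W j m)) (Cmul (Cconj (W j b)) (z b)))))).
      * apply Csum_ext; intros; apply Csum_swap.
      * rewrite Csum_swap. apply Csum_ext; intros j _. rewrite <- Csum_mulr.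
        apply Csum_ext; intros. apply Csum_mull.
Qed.
End OrthonormalFrame.

Section Spectral.
Variables (d : nat) (pr : nat -> R) (W : nat -> Vec).

Definition spectral : Mat :=
  fun a b => Csum d (fun n => Cmul (RtoC (pr n)) (outer (W n) (W n) a b)).

Lemma spectral_herm : hermitian d spectral.
Proof.
  intros i j _ _. unfold spectral. rewrite Csum_conj.
  apply Csum_ext; intros. unfold outer. Csolve.
Qed.

Lemma app_spectral u m :
  app d spectral u m = Csum d (fun n => Cmul (RtoC (pr n)) (Cmul (inner d (W n) u) (W n m))).
Proof.
  unfold app, spectral, inner.
  transitivity (Csum d (fun b => Csum d (fun n =>
    Cmul (Cmul (RtoC (pr n)) (W n m)) (Cmul (Cconj (W n b)) (u b))))).
  - apply Csum_ext; intros. rewrite <- Csum_mulr. apply Csum_ext; intros. unfold outer. Csolve.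
  - rewrite Csum_swap. apply Csum_ext; intros. rewrite Csum_mull. Csolve.
Qed.

Lemma trace_spectral M :
  mtrace d (mmul d spectral M) = Csum d (fun i => Cmul (RtoC (pr i)) (inner d (W i) (app d M (W i)))).
Proof.
  unfold mtrace, mmul, spectral, inner, app, outer.
  transitivity (Csum d (fun a => Csum d (fun b => Csum d (fun n =>
    Cmul (RtoC (pr n)) (Cmul (Cconj (W n b)) (Cmul (M b a) (W n a))))))).
  - apply Csum_ext; intros a _. apply Csum_ext; intros b _. rewrite <- Csum_mulr.
    apply Csum_ext; intros; Csolve.
  - rewrite Csum_swap.
    transitivity (Csum d (fun b => Csum d (fun n => Csum d (fun a =>
      Cmul (RtoC (pr n)) (Cmul (Cconj (W n b)) (Cmul (M b a) (W n a))))))).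
    + apply Csum_ext; intros. apply Csum_swap.
    + rewrite Csum_swap. apply Csum_ext; intros n _. rewrite <- Csum_mull.
      apply Csum_ext; intros b _. rewrite <- !Csum_mull. apply Csum_ext; intros; Csolve.
Qed.

Hypothesis Hon : forall i j, (i < d)%nat -> (j < d)%nat -> inner d (W i) (W j) = delta i j.

Lemma app_spectral_eigen i m : (i < d)%nat -> app d spectral (W i) m = Cmul (RtoC (pr i)) (W i m).
Proof.
  intros Hi. rewrite app_spectral.
  rewrite <- (Csum_delta_r d i (fun n => Cmul (RtoC (pr n)) (W n m)) Hi).
  apply Csum_ext; intros n Hn. rewrite Hon by auto. Csolve.
Qed.

Lemma sandwich_anticomm A i j : (i < d)%nat -> (j < d)%nat ->
  inner d (W i) (app d (fun a b => Cmul (RtoC (/ 2))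
     (Cadd (mmul d spectral A a b) (mmul d A spectral a b))) (W j)) =
  Cmul (RtoC ((pr i + pr j) / 2)) (inner d (W i) (app d A (W j))).
Proof.
  intros Hi Hj. rewrite sand_scal, sand_add.
  assert (Left : inner d (W i) (app d (mmul d spectral A) (W j)) =
                 Cmul (RtoC (pr i)) (inner d (W i) (app d A (W j)))).
  { rewrite (inner_ext d _ (W i) _ (app d spectral (app d A (W j)))) by (auto; intros; apply app_mmul).
    rewrite <- inner_app_herm by apply spectral_herm.
    rewrite <- inner_scal_l. apply inner_ext; auto. intros; apply app_spectral_eigen; auto. }
  assert (Right : inner d (W i) (app d (mmul d A spectral) (W j)) =
                  Cmul (RtoC (pr j)) (inner d (W i) (app d A (W j)))).
  { rewrite (inner_ext d _ (W i) _ (app d A (app d spectral (W j)))) by (auto; intros; apply app_mmul).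
    rewrite <- inner_scal_r. apply inner_ext; auto. intros m _.
    rewrite <- app_scal. apply app_ext. intros; apply app_spectral_eigen; auto. }
  rewrite Left, Right. Csolve.
Qed.

Lemma trace_spectral_sandwich A B : hermitian d A ->
  Cre (mtrace d (mmul d (mmul d spectral A) B)) =
  Rsum d (fun i => pr i * Rsum d (fun j =>
    Cre (Cmul (Cconj (inner d (W j) (app d A (W i)))) (inner d (W j) (app d B (W i)))))).
Proof.
  intros HA.
  transitivity (Cre (mtrace d (mmul d spectral (mmul d A B)))).
  { f_equal. unfold mtrace. apply Csum_ext; intros; apply mmul_assoc. }
  rewrite trace_spectral, Cre_sum. apply Rsum_ext; intros i Hi.
  rewrite Cre_scal. f_equal.
  rewrite (inner_ext d _ (W i) _ (app d A (app d B (W i)))) by (auto; intros; apply app_mmul).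
  rewrite <- inner_app_herm, (parseval d W Hon), Cre_sum by auto.
  apply Rsum_ext; intros j Hj. rewrite <- conj_inner. reflexivity.
Qed.

Variables (dpr : nat -> R) (dW : nat -> Vec).

Definition spectral_deriv : Mat := fun a b => Csum d (fun n =>
  Cadd (Cmul (RtoC (dpr n)) (outer (W n) (W n) a b))
       (Cmul (RtoC (pr n)) (Cadd (outer (dW n) (W n) a b) (outer (W n) (dW n) a b)))).

(* The frame stays orthonormal to first order. *)
Hypothesis Htan : forall i j, (i < d)%nat -> (j < d)%nat ->
  Cadd (inner d (dW i) (W j)) (inner d (W i) (dW j)) = Czero.

Lemma sandwich_spectral_deriv i j : (i < d)%nat -> (j < d)%nat ->
  inner d (W i) (app d spectral_deriv (W j)) =
  Cadd (Cmul (delta i j) (RtoC (dpr i))) (Cmul (RtoC (pr j - pr i)) (inner d (W i) (dW j))).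
Proof.
  intros Hi Hj. unfold spectral_deriv. rewrite sand_sum.
  transitivity (Csum d (fun n => Cadd
    (Cmul (delta i n) (Cadd (Cmul (delta n j) (RtoC (dpr n)))
                            (Cmul (RtoC (- pr n)) (inner d (W n) (dW j)))))
    (Cmul (delta n j) (Cmul (RtoC (pr n)) (inner d (W i) (dW n)))))).
  - apply Csum_ext; intros n Hn.
    rewrite sand_add, !sand_scal, sand_add, !sand_outer, (Hon i n), (Hon n j) by auto.
    assert (Hflip : inner d (dW n) (W j) = Cmul (RtoC (-1)) (inner d (W n) (dW j))).
    { transitivity (Cadd (Cadd (inner d (dW n) (W j)) (inner d (W n) (dW j)))
                         (Cmul (RtoC (-1)) (inner d (W n) (dW j)))); [Csolve|].
      rewrite Htan by auto. Csolve. }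
    rewrite Hflip. Csolve.
  - rewrite Csum_add, Csum_delta_l, Csum_delta_r by auto. Csolve.
Qed.
End Spectral.

Lemma rho_spectral d (P : nat -> Pt -> R) (w : nat -> Pt -> Vec) (x : Pt) :
  rho d P w x = spectral d (fun n => P n x) (fun n => w n x).
Proof. reflexivity. Qed.

Section PartialDerivatives.
Variables (l : nat) (x : Pt).

Lemma shift0 : shift x l 0 = x.
Proof. apply functional_extensionality; intros i. unfold shift. destruct (Nat.eqb i l); ring. Qed.

Lemma pR_plus f g a b : partial_at f l x a -> partial_at g l x b ->
  partial_at (fun y => f y + g y) l x (a + b).
Proof. apply derivable_pt_lim_plus. Qed.

Lemma pR_minus f g a b : partial_at f l x a -> partial_at g l x b ->
  partial_at (fun y => f y - g y) l x (a - b).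
Proof. apply derivable_pt_lim_minus. Qed.

Lemma pR_opp f a : partial_at f l x a -> partial_at (fun y => - f y) l x (- a).
Proof. apply derivable_pt_lim_opp. Qed.

Lemma pR_mult f g a b : partial_at f l x a -> partial_at g l x b ->
  partial_at (fun y => f y * g y) l x (a * g x + f x * b).
Proof.
  intros Hf Hg. pose proof (derivable_pt_lim_mult _ _ _ _ _ Hf Hg) as H.
  cbv beta in H. rewrite shift0 in H. exact H.
Qed.

Lemma pR_const c : partial_at (fun _ => c) l x 0.
Proof. apply derivable_pt_lim_const. Qed.

Lemma pR_unique f a b : partial_at f l x a -> partial_at f l x b -> a = b.
Proof. apply uniqueness_limite. Qed.

Lemma pR_loc_const f dl : 0 < dl -> (forall t, Rabs t < dl -> f (shift x l t) = f x) ->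
  partial_at f l x 0.
Proof.
  intros Hdl H eps Heps. exists (mkposreal dl Hdl). intros h Hh Hhdl. simpl in Hhdl.
  rewrite Rplus_0_l, H, shift0 by auto.
  replace ((f x - f x) / h - 0) with 0 by (field; auto). rewrite Rabs_R0. auto.
Qed.

Lemma pC_eq f a b : partialC_at f l x a -> a = b -> partialC_at f l x b.
Proof. intros H <-. exact H. Qed.

Lemma pC_add f g a b : partialC_at f l x a -> partialC_at g l x b ->
  partialC_at (fun y => Cadd (f y) (g y)) l x (Cadd a b).
Proof. intros [H1 H2] [H3 H4]. split; [exact (pR_plus _ _ _ _ H1 H3) | exact (pR_plus _ _ _ _ H2 H4)]. Qed.

Lemma pC_mul f g a b : partialC_at f l x a -> partialC_at g l x b ->
  partialC_at (fun y => Cmul (f y) (g y)) l x (Cadd (Cmul a (g x)) (Cmul (f x) b)).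
Proof.
  intros [H1 H2] [H3 H4]. split.
  - replace (Cre (Cadd (Cmul a (g x)) (Cmul (f x) b))) with
      ((Cre a * Cre (g x) + Cre (f x) * Cre b) - (Cim a * Cim (g x) + Cim (f x) * Cim b))
      by (unfold Cre, Cim, Cadd, Cmul; simpl; ring).
    exact (pR_minus _ _ _ _ (pR_mult _ _ _ _ H1 H3) (pR_mult _ _ _ _ H2 H4)).
  - replace (Cim (Cadd (Cmul a (g x)) (Cmul (f x) b))) with
      ((Cre a * Cim (g x) + Cre (f x) * Cim b) + (Cim a * Cre (g x) + Cim (f x) * Cre b))
      by (unfold Cre, Cim, Cadd, Cmul; simpl; ring).
    exact (pR_plus _ _ _ _ (pR_mult _ _ _ _ H1 H4) (pR_mult _ _ _ _ H2 H3)).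
Qed.

Lemma pC_conj f a : partialC_at f l x a -> partialC_at (fun y => Cconj (f y)) l x (Cconj a).
Proof. intros [H1 H2]. split; [exact H1 | exact (pR_opp _ _ H2)]. Qed.

Lemma pC_RtoC h a : partial_at h l x a -> partialC_at (fun y => RtoC (h y)) l x (RtoC a).
Proof. intros H. split; [exact H | exact (pR_const 0)]. Qed.

Lemma pC_sum n F F' : (forall i, (i < n)%nat -> partialC_at (F i) l x (F' i)) ->
  partialC_at (fun y => Csum n (fun i => F i y)) l x (Csum n F').
Proof.
  induction n as [|n IH]; intros H; simpl.
  - split; apply pR_const.
  - apply (pC_add (fun y => Csum n (fun i => F i y)) (F n)).
    + apply IH; intros; apply H; lia.
    + apply H; lia.
Qed.

Lemma pC_unique f a b : partialC_at f l x a -> partialC_at f l x b -> a = b.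
Proof.
  intros [H1 H2] [H3 H4].
  apply injective_projections; [exact (pR_unique _ _ _ H1 H3) | exact (pR_unique _ _ _ H2 H4)].
Qed.

Lemma pC_loc_const f dl : 0 < dl -> (forall t, Rabs t < dl -> f (shift x l t) = f x) ->
  partialC_at f l x Czero.
Proof.
  intros Hdl H. split; apply (pR_loc_const _ dl Hdl); intros t Ht; rewrite H; auto.
Qed.

Lemma inner_partial d (f g : Pt -> Vec) (f' g' : Vec) :
  (forall m, (m < d)%nat -> partialC_at (fun y => f y m) l x (f' m)) ->
  (forall m, (m < d)%nat -> partialC_at (fun y => g y m) l x (g' m)) ->
  partialC_at (fun y => inner d (f y) (g y)) l x (Cadd (inner d f' (g x)) (inner d (f x) g')).
Proof.
  intros Hf Hg. unfold inner. eapply pC_eq.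
  - apply (pC_sum d (fun m y => Cmul (Cconj (f y m)) (g y m))). intros m Hm.
    apply (pC_mul (fun y => Cconj (f y m)) (fun y => g y m)); auto. apply pC_conj; auto.
  - rewrite <- Csum_add. reflexivity.
Qed.
End PartialDerivatives.

Lemma spectral_partial d (P : nat -> Pt -> R) (w : nat -> Pt -> Vec) x k
    (dpr : nat -> R) (dW : nat -> Vec) a b :
  (forall i, (i < d)%nat -> partial_at (P i) k x (dpr i)) ->
  (forall i m, (i < d)%nat -> (m < d)%nat -> partialC_at (fun y => w i y m) k x (dW i m)) ->
  (a < d)%nat -> (b < d)%nat ->
  partialC_at (fun y => rho d P w y a b) k x
    (spectral_deriv d (fun n => P n x) (fun n => w n x) dpr dW a b).
Proof.
  intros HdP Hdw Ha Hb. unfold rho, outer. eapply pC_eq.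
  - apply (pC_sum k x d (fun n y => Cmul (RtoC (P n y)) (Cmul (w n y a) (Cconj (w n y b))))).
    intros n Hn.
    apply (pC_mul k x (fun y => RtoC (P n y)) (fun y => Cmul (w n y a) (Cconj (w n y b)))).
    + apply pC_RtoC, HdP; auto.
    + apply (pC_mul k x (fun y => w n y a) (fun y => Cconj (w n y b))); auto.
      apply pC_conj; auto.
  - unfold spectral_deriv, outer. apply Csum_ext; intros. Csolve.
Qed.

Lemma near_shift p x l t dl : Rabs t < dl -> near p x dl (shift x l t).
Proof.
  intros Ht m _. unfold shift. destruct (Nat.eqb m l).
  - replace (x m + t - x m) with t by ring. exact Ht.
  - replace (x m - x m) with 0 by ring. rewrite Rabs_R0. pose proof (Rabs_pos t). lra.
Qed.

Lemma frame_tangent d p Theta (w : nat -> Pt -> Vec) x (dw : nat -> nat -> Vec) :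
  is_open p Theta -> Theta x ->
  (forall y i j, Theta y -> (i < d)%nat -> (j < d)%nat -> inner d (w i y) (w j y) = delta i j) ->
  (forall i k m, (i < d)%nat -> (k < p)%nat -> (m < d)%nat ->
     partialC_at (fun y => w i y m) k x (dw i k m)) ->
  forall i j k, (i < d)%nat -> (j < d)%nat -> (k < p)%nat ->
  Cadd (inner d (dw i k) (w j x)) (inner d (w i x) (dw j k)) = Czero.
Proof.
  intros Hopen Hx Hon Hdw i j k Hi Hj Hk.
  destruct (Hopen x Hx) as [dl [Hdl Hnear]].
  apply (pC_unique k x (fun y => inner d (w i y) (w j y))).
  - apply inner_partial; intros m Hm; apply Hdw; auto.
  - apply (pC_loc_const k x _ dl Hdl). intros t Ht.
    rewrite !Hon; auto. apply Hnear, near_shift, Ht.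
Qed.

Lemma quad_ext p M M' v : (forall k l, (k < p)%nat -> (l < p)%nat -> M k l = M' k l) ->
  quad p M v = quad p M' v.
Proof. intros H. unfold quad. apply Rsum_ext; intros; apply Rsum_ext; intros. rewrite H; auto. Qed.

Lemma quad_add p M M' v : quad p (fun k l => M k l + M' k l) v = quad p M v + quad p M' v.
Proof.
  unfold quad. rewrite <- Rsum_add. apply Rsum_ext; intros.
  rewrite <- Rsum_add. apply Rsum_ext; intros. ring.
Qed.

Lemma quad_scal p c M v : quad p (fun k l => c * M k l) v = c * quad p M v.
Proof.
  unfold quad. rewrite <- Rsum_mull. apply Rsum_ext; intros.
  rewrite <- Rsum_mull. apply Rsum_ext; intros. ring.
Qed.

Lemma quad_sum p n F v :
  quad p (fun k l => Rsum n (fun i => F i k l)) v = Rsum n (fun i => quad p (F i) v).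
Proof.
  unfold quad.
  transitivity (Rsum p (fun k => Rsum n (fun i => Rsum p (fun l => v k * v l * F i k l)))).
  - apply Rsum_ext; intros. rewrite Rsum_swap. apply Rsum_ext; intros.
    rewrite <- Rsum_mull. apply Rsum_ext; intros; ring.
  - apply Rsum_swap.
Qed.

Definition gram (a : nat -> C) (k l : nat) : R := Cre (Cmul (Cconj (a k)) (a l)).
Definition vcomb (p : nat) (v : nat -> R) (a : nat -> C) : C :=
  Csum p (fun k => Cmul (RtoC (v k)) (a k)).

Lemma quad_gram p a v : quad p (gram a) v = Cnorm2 (vcomb p v a).
Proof.
  transitivity (Cre (Cmul (Cconj (vcomb p v a)) (vcomb p v a))).
  - unfold vcomb. rewrite Csum_conj, <- Csum_mulr, Cre_sum. unfold quad.
    apply Rsum_ext; intros k _. rewrite <- Csum_mull, Cre_sum.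
    apply Rsum_ext; intros l _. unfold gram, Cre, Cmul, Cconj, RtoC. simpl. ring.
  - unfold Cnorm2, Cre, Cim, Cmul, Cconj. simpl. ring.
Qed.

Lemma vcomb_lin p v s c e a b g :
  (forall k, (k < p)%nat -> Cmul s (a k) = Cadd (Cmul c (b k)) (Cmul e (g k))) ->
  Cmul s (vcomb p v a) = Cadd (Cmul c (vcomb p v b)) (Cmul e (vcomb p v g)).
Proof.
  intros H. unfold vcomb. rewrite <- !Csum_mull, <- Csum_add. apply Csum_ext; intros k Hk.
  transitivity (Cmul (RtoC (v k)) (Cmul s (a k))); [Csolve|].
  rewrite H by auto. Csolve.
Qed.

Lemma vcomb_conj p v c a b :
  (forall k, (k < p)%nat -> a k = Cmul c (Cconj (b k))) ->
  vcomb p v a = Cmul c (Cconj (vcomb p v b)).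
Proof.
  intros H. unfold vcomb. rewrite Csum_conj, <- Csum_mull. apply Csum_ext; intros k Hk.
  rewrite H by auto. Csolve.
Qed.

Definition inv0 (r : R) : R := if Req_EM_T r 0 then 0 else / r.

Lemma diag_term q z a : 0 <= q -> Cmul (RtoC q) z = a -> q * Cnorm2 z <= inv0 q * Cnorm2 a.
Proof.
  intros Hq <-. rewrite Cnorm2_mul, Cnorm2_RtoC. unfold inv0.
  destruct (Req_EM_T q 0) as [->|Hq0]; right; [ring | field; exact Hq0].
Qed.

Lemma pair_term s q z y : 0 <= s -> q * q <= s * s ->
  Cmul (RtoC (s / 2)) z = Cmul (RtoC q) y -> s * Cnorm2 z <= 4 * s * Cnorm2 y.
Proof.
  intros Hs Hq H. apply (f_equal Cnorm2) in H. rewrite !Cnorm2_mul, !Cnorm2_RtoC in H.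
  pose proof (Cnorm2_nonneg y) as Hy.
  destruct Hs as [Hs|<-]; [|lra].
  apply (Rmult_le_reg_l s); auto.
  assert (q * q * Cnorm2 y <= s * s * Cnorm2 y) by (apply Rmult_le_compat_r; auto).
  lra.
Qed.

Lemma eigenframe_bound d (pr : nat -> R) (ell u : nat -> nat -> C) (alpha : nat -> C) :
  (forall i, (i < d)%nat -> 0 <= pr i) ->
  (forall i j, (i < d)%nat -> (j < d)%nat -> Cnorm2 (ell j i) = Cnorm2 (ell i j)) ->
  (forall i j, (i < d)%nat -> (j < d)%nat -> Cnorm2 (u j i) = Cnorm2 (u i j)) ->
  (forall i j, (i < d)%nat -> (j < d)%nat ->
     Cmul (RtoC ((pr i + pr j) / 2)) (ell i j) =
     Cadd (Cmul (delta i j) (alpha i)) (Cmul (RtoC (pr j - pr i)) (u i j))) ->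
  Rsum d (fun i => pr i * Rsum d (fun j => Cnorm2 (ell j i))) <=
  Rsum d (fun i => inv0 (pr i) * Cnorm2 (alpha i)) +
  4 * Rsum d (fun j => Rsum j (fun i => (pr i + pr j) * Cnorm2 (u j i))).
Proof.
  intros Hpos Hell Hu Hrel.
  rewrite (Rsum_ext d _ (fun i => Rsum d (fun j => pr i * Cnorm2 (ell j i))))
    by (intros; symmetry; apply Rsum_mull).
  rewrite Rsum_split. apply Rplus_le_compat.
  - apply Rsum_le; intros i Hi. apply diag_term; auto.
    transitivity (Cmul (RtoC ((pr i + pr i) / 2)) (ell i i)); [Csolve|].
    rewrite Hrel, delta_refl by auto. Csolve.
  - rewrite <- Rsum_mull. apply Rsum_le; intros j Hj.
    rewrite <- Rsum_mull. apply Rsum_le; intros i Hij.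
    assert (Hi : (i < d)%nat) by lia.
    rewrite (Hell i j), (Hu i j) by auto.
    pose proof (Hpos i Hi). pose proof (Hpos j Hj).
    assert (Hpair : (pr i + pr j) * Cnorm2 (ell i j) <= 4 * (pr i + pr j) * Cnorm2 (u i j)).
    { apply (pair_term _ (pr j - pr i)); [lra | nra |].
      rewrite Hrel, delta_neq by lia. Csolve. }
    lra.
Qed.

Section EigenframeComparison.
Variables (d p : nat) (P : nat -> Pt -> R) (w : nat -> Pt -> Vec) (x : Pt).
Variables (dP : nat -> nat -> R) (dw : nat -> nat -> Vec) (lam : nat -> Mat) (v : nat -> R).

Hypothesis Hon : forall i j, (i < d)%nat -> (j < d)%nat -> inner d (w i x) (w j x) = delta i j.
Hypothesis Hpos : forall i, (i < d)%nat -> 0 <= P i x.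
Hypothesis Htan : forall i j k, (i < d)%nat -> (j < d)%nat -> (k < p)%nat ->
  Cadd (inner d (dw i k) (w j x)) (inner d (w i x) (dw j k)) = Czero.
Hypothesis Hherm : forall k, (k < p)%nat -> hermitian d (lam k).
Hypothesis Hsld : forall k a b, (k < p)%nat -> (a < d)%nat -> (b < d)%nat ->
  spectral_deriv d (fun n => P n x) (fun n => w n x) (fun n => dP n k) (fun n => dw n k) a b =
  Cmul (RtoC (/ 2)) (Cadd (mmul d (rho d P w x) (lam k) a b) (mmul d (lam k) (rho d P w x) a b)).

Definition sld_coef (i j : nat) : C := vcomb p v (fun k => inner d (w i x) (app d (lam k) (w j x))).
Definition frame_coef (i j : nat) : C := vcomb p v (fun k => inner d (w i x) (dw j k)).
Definition score_coef (i : nat) : C := vcomb p v (fun k => RtoC (dP i k)).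

Lemma quad_HSLD : quad p (HSLD d P w x lam) v =
  Rsum d (fun i => P i x * Rsum d (fun j => Cnorm2 (sld_coef j i))).
Proof.
  rewrite (quad_ext p _ (fun k l => Rsum d (fun i => P i x * Rsum d (fun j =>
             gram (fun k => inner d (w j x) (app d (lam k) (w i x))) k l)))).
  - rewrite quad_sum. apply Rsum_ext; intros i _.
    rewrite quad_scal, quad_sum. f_equal. apply Rsum_ext; intros j _. apply quad_gram.
  - intros k l Hk _. unfold HSLD. rewrite rho_spectral.
    exact (trace_spectral_sandwich d _ _ Hon _ _ (Hherm k Hk)).
Qed.

Lemma quad_CL : quad p (CL d P w x dP dw) v =
  Rsum d (fun i => inv0 (P i x) * Cnorm2 (score_coef i)) +
  4 * Rsum d (fun j => Rsum j (fun i => (P i x + P j x) * Cnorm2 (frame_coef j i))).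
Proof.
  rewrite (quad_ext p _ (fun k l =>
     Rsum d (fun i => inv0 (P i x) * gram (fun k => RtoC (dP i k)) k l) +
     4 * Rsum d (fun j => Rsum j (fun i =>
           (P i x + P j x) * gram (fun k => inner d (w j x) (dw i k)) k l)))).
  - rewrite quad_add, quad_sum, quad_scal, quad_sum. f_equal; [|f_equal].
    + apply Rsum_ext; intros i _. rewrite quad_scal, quad_gram. reflexivity.
    + apply Rsum_ext; intros j _. rewrite quad_sum. apply Rsum_ext; intros i _.
      rewrite quad_scal, quad_gram. reflexivity.
  - intros k l _ _. unfold CL. f_equal.
    + apply Rsum_ext; intros i _. unfold inv0, gram, Cre, Cmul, Cconj, RtoC. simpl.
      destruct (Req_EM_T (P i x) 0); ring.
    + f_equal. rewrite Cre_sum. apply Rsum_ext; intros j _. rewrite Cre_sum.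
      apply Rsum_ext; intros i _. rewrite <- (conj_inner d (w j x) (dw i k)).
      unfold gram, Cre, Cmul, Cconj, RtoC. simpl. ring.
Qed.

Lemma sld_relation i j : (i < d)%nat -> (j < d)%nat ->
  Cmul (RtoC ((P i x + P j x) / 2)) (sld_coef i j) =
  Cadd (Cmul (delta i j) (score_coef i)) (Cmul (RtoC (P j x - P i x)) (frame_coef i j)).
Proof.
  intros Hi Hj. apply vcomb_lin. intros k Hk.
  rewrite <- (sandwich_anticomm d (fun n => P n x) (fun n => w n x) Hon) by auto.
  rewrite <- rho_spectral, <- (sand_ext d _ _ _ _ (fun a b Ha Hb => Hsld k a b Hk Ha Hb)).
  exact (sandwich_spectral_deriv d (fun n => P n x) (fun n => w n x) Hon
           (fun n => dP n k) (fun n => dw n k) (fun n m Hn Hm => Htan n m k Hn Hm Hk) i j Hi Hj).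
Qed.

Lemma sld_coef_sym i j : (i < d)%nat -> (j < d)%nat -> Cnorm2 (sld_coef j i) = Cnorm2 (sld_coef i j).
Proof.
  intros Hi Hj. unfold sld_coef. rewrite (vcomb_conj p v Cone _
    (fun k => inner d (w i x) (app d (lam k) (w j x)))).
  - rewrite Cnorm2_mul, Cnorm2_conj. unfold Cnorm2, Cone, Cre, Cim. simpl. ring.
  - intros k Hk. rewrite conj_inner, <- inner_app_herm by auto. Csolve.
Qed.

Lemma frame_coef_sym i j : (i < d)%nat -> (j < d)%nat -> Cnorm2 (frame_coef j i) = Cnorm2 (frame_coef i j).
Proof.
  intros Hi Hj. unfold frame_coef. rewrite (vcomb_conj p v (RtoC (-1)) _
    (fun k => inner d (w i x) (dw j k))).
  - rewrite Cnorm2_mul, Cnorm2_conj, Cnorm2_RtoC. ring.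
  - intros k Hk. rewrite conj_inner.
    transitivity (Cadd (Cadd (inner d (dw j k) (w i x)) (inner d (w j x) (dw i k)))
                       (Cmul (RtoC (-1)) (inner d (dw j k) (w i x)))); [Csolve|].
    rewrite Htan by auto. Csolve.
Qed.

Theorem SLD_le_CL_at : quad p (HSLD d P w x lam) v <= quad p (CL d P w x dP dw) v.
Proof.
  rewrite quad_HSLD, quad_CL.
  apply eigenframe_bound.
  - exact Hpos.
  - exact sld_coef_sym.
  - exact frame_coef_sym.
  - exact sld_relation.
Qed.
End EigenframeComparison.

Theorem lemma6 (d p : nat) (Theta : Pt -> Prop)
  (P : nat -> Pt -> R) (w : nat -> Pt -> Vec)
  (hopen : is_open p Theta)
  (hPs : forall k, (k < d)%nat -> smooth p Theta (P k))
  (hP01 : forall k x, (k < d)%nat -> Theta x -> 0 <= P k x <= 1)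
  (hsum : forall x, Theta x -> Rsum d (fun k => P k x) = 1)
  (hws : forall k m, (k < d)%nat -> (m < d)%nat -> smoothC p Theta (fun x => w k x m))
  (hon : forall x i j, Theta x -> (i < d)%nat -> (j < d)%nat ->
           inner d (w i x) (w j x) = if Nat.eqb i j then Cone else Czero)
  (x : Pt) (hx : Theta x)
  (dP : nat -> nat -> R)
  (hdP : forall i k, (i < d)%nat -> (k < p)%nat -> partial_at (P i) k x (dP i k))
  (dw : nat -> nat -> Vec)
  (hdw : forall i k m, (i < d)%nat -> (k < p)%nat -> (m < d)%nat ->
           partialC_at (fun y => w i y m) k x (dw i k m))
  (lam : nat -> Mat)
  (hlh : forall k, (k < p)%nat -> hermitian d (lam k))
  (hsld : forall k i j, (k < p)%nat -> (i < d)%nat -> (j < d)%nat ->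
     partialC_at (fun y => rho d P w y i j) k x
       (Cmul (RtoC (/ 2)) (Cadd (mmul d (rho d P w x) (lam k) i j)
                                (mmul d (lam k) (rho d P w x) i j))))
  (v : nat -> R) :
  quad p (HSLD d P w x lam) v <= quad p (CL d P w x dP dw) v.
Proof.
  apply SLD_le_CL_at.
  - intros i j Hi Hj. exact (hon x i j hx Hi Hj).
  - intros i Hi. apply hP01; auto.
  - exact (frame_tangent d p Theta w x dw hopen hx hon hdw).
  - exact hlh.
  - (* the product-rule derivative of rho is the one prescribed by the SLD equation *)
    intros k a b Hk Ha Hb. apply (pC_unique k x (fun y => rho d P w y a b)).
    + apply spectral_partial; auto.
    + apply hsld; auto.
Qed.
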